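(* Let $t_1, t_2 \in \mathsf{Topo}$ and suppose $f$ embeds $t_1$ inside $t_2$. For every $q \in \mathsf{PIFOTree}(t_1)$, if $\vdash q$ then $\vdash \widehat f(q)$.
   Context: Fix a set $\mathsf{Pkt}$ of packets and a totally ordered set $\mathsf{Rk}$ of ranks. PIFOs: for a set $S$, a PIFO over $S$ is a finite sequence of pairs $(s,r)\in S\times\mathsf{Rk}$ in insertion order; $\mathsf{PIFO}(S)$ is the set of these; $|p|$ is the number of entries, $|p|_s$ the number with element $s$. Topologies: $\mathsf{Topo}$ is the smallest set with $*\in\mathsf{Topo}$ and $\mathsf{Node}(\vec t)\in\mathsf{Topo}$ for $n\in\mathbb{N}$, $\vec t\in\mathsf{Topo}^n$. PIFO trees: $\mathsf{Leaf}(p)\in\mathsf{PIFOTree}( * )$ for $p\in\mathsf{PIFO}(\mathsf{Pkt})$; $\mathsf{Internal}(\vec q,p)\in\mathsf{PIFOTree}(\mathsf{Node}(\vec t))$ whenever $\vec t\in\mathsf{Topo}^n$, $p\in\mathsf{PIFO}(\{1,\dots,n\})$, $\vec q[i]\in\mathsf{PIFOTree}(\vec t[i])$. Size: $|\mathsf{Leaf}(p)|=|p|$, $|\mathsf{Internal}(\vec q,p)|=\sum_i|\vec q[i]|$. Well-formedness: $\vdash\mathsf{Leaf}(p)$ always; $\vdash\mathsf{Internal}(\vec q,p)$ iff for all $i$, $\vdash\vec q[i]$ and $|p|_i=|\vec q[i]|$. Addresses: $\mathsf{Addr}(t)\subseteq\mathbb{N}^*$ is the smallest set with $\epsilon\in\mathsf{Addr}(t)$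 and $i\cdot\alpha\in\mathsf{Addr}(\mathsf{Node}(\vec t))$ for $1\le i\le n$, $\alpha\in\mathsf{Addr}(\vec t[i])$. Subtrees: $t/\epsilon=t$, $\mathsf{Node}(\vec t)/(i\cdot\alpha)=\vec t[i]/\alpha$. An embedding of $t_1$ in $t_2$ is an injective $f:\mathsf{Addr}(t_1)\to\mathsf{Addr}(t_2)$ with $f(\epsilon)=\epsilon$, $t_2/f(\alpha)=*$ whenever $t_1/\alpha=*$, and $\alpha$ a prefix of $\alpha'$ iff $f(\alpha)$ a prefix of $f(\alpha')$. If $t_1=*$ then $t_2=*$; if $t_1=\mathsf{Node}(\vec t_1)$, the map $f_i$ defined by $f(i\cdot\alpha)=f(i)\cdot f_i(\alpha)$ is an embedding of $t_1/i$ in $t_2/f(i)$. Lifting $\widehat f:\mathsf{PIFOTree}(t_1)\to\mathsf{PIFOTree}(t_2)$, by recursion on $t_1$: if $t_1=*$, $\widehat f(q)=q$. If $t_1=\mathsf{Node}(\vec t_1)$ with $n$ children and $q=\mathsf{Internal}(\vec q,p)$, define for each address $\alpha$ of $t_2$ that is a prefix of some $f(i)$ a tree $\widehat f(q)_\alpha\in\mathsf{PIFOTree}(t_2/\alpha)$, from longer to shorter $\alpha$: if $\alpha=f(i)$, $\widehat f(q)_\alpha=\widehat{f_i}(\vec q[i])$; otherwise $t_2/\alpha$ has some $m$ children and $\widehat f(q)_\alpha=\mathsf{Internal}(\vec q_\alpha,p_\alpha)$, where $\vec q_\alpha[j]=\widehat f(q)_{\alpha\cdot j}$ if $\alpha\cdot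 j$ is a prefix of some $f(i)$ and otherwise $\vec q_\alpha[j]$ is the tree of topology $t_2/(\alpha\cdot j)$ with all PIFOs empty; and $p_\alpha$ is obtained from $p$ by replacing each entry $(i,r)$ by $(j,r)$ where $\alpha\cdot j$ is a prefix of $f(i)$, deleting entries for which no such $j$ exists, keeping the order. Finally $\widehat f(q)=\widehat f(q)_\epsilon$. *)

From mathcomp Require Import all_boot all_order.
Set Implicit Arguments. Unset Strict Implicit. Unset Printing Implicit Defensive.

Inductive topo : Type := Star | Node of seq topo.

(* Addresses (0-based child indices). *)
Fixpoint addr (t : topo) (a : seq nat) {struct a} : bool :=
  match a, t with
  | [::], _ => true
  | i :: a', Node ts => (i < size ts) && addr (nth Star ts i) a'
  | _ :: _, Star => false
  end.

(* Subtree t/a (meaningful for a an address of t). *)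
Fixpoint subtopo (t : topo) (a : seq nat) {struct a} : topo :=
  match a, t with
  | [::], _ => t
  | i :: a', Node ts => subtopo (nth Star ts i) a'
  | _ :: _, Star => Star
  end.

(* Embedding of t1 in t2 (f is only relevant on Addr(t1)). *)
Definition embedding (t1 t2 : topo) (f : seq nat -> seq nat) : Prop :=
  [/\ (forall a, addr t1 a -> addr t2 (f a)),
      (forall a a', addr t1 a -> addr t1 a' -> f a = f a' -> a = a'),
      f [::] = [::],
      (forall a, addr t1 a -> subtopo t1 a = Star -> subtopo t2 (f a) = Star)
    & (forall a a', addr t1 a -> addr t1 a' ->
         prefix a a' = prefix (f a) (f a'))].

(* f_i : f (i . a) = f (i) . f_i (a) *)
Definition fchild (f : seq nat -> seq nat) (i : nat) : seq nat -> seq nat :=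
  fun a => drop (size (f [:: i])) (f (i :: a)).

Definition child_towards (a b : seq nat) : option nat :=
  if prefix a b && (size a < size b) then Some (nth 0 b (size a)) else None.

Section Trees.
Variables (Pkt Rk : Type).

(* PIFOs over S: finite sequences of (element, rank) pairs in insertion order. *)
Definition PIFO (S : Type) := seq (S * Rk).

(* Raw PIFO trees; Internal qs p with child indices 0..n-1 in p. *)
Inductive ptree : Type :=
  | Leaf of PIFO Pkt
  | Internal of seq ptree & PIFO nat.

Fixpoint has_topo (q : ptree) (t : topo) {struct q} : Prop :=
  match q, t with
  | Leaf _, Star => True
  | Internal qs p, Node ts =>
      size qs = size ts /\ all (fun e => e.1 < size ts) p /\
      (fix go (qs : seq ptree) (ts : seq topo) {struct qs} : Prop :=
         match qs, ts with
         | [::], [::] => True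
         | q :: qs', t :: ts' => has_topo q t /\ go qs' ts'
         | _, _ => False
         end) qs ts
  | _, _ => False
  end.

Fixpoint tsize (q : ptree) : nat :=
  match q with
  | Leaf p => size p
  | Internal qs p => sumn (map tsize qs)
  end.

Fixpoint wf (q : ptree) : Prop :=
  match q with
  | Leaf _ => True
  | Internal qs p =>
      (fix go (qs : seq ptree) {struct qs} : Prop :=
         match qs with [::] => True | q :: qs' => wf q /\ go qs' end) qs /\
      (forall i, i < size qs ->
         count (fun e => e.1 == i) p = tsize (nth (Leaf [::]) qs i))
  end.

Fixpoint empty_tree (t : topo) : ptree :=
  match t with
  | Star => Leaf [::]
  | Node ts => Internal (map empty_tree ts) [::]
  end.

Definition lifter := topo -> (seq nat -> seq nat) -> ptree -> ptree.

(* build n recs qs p f a u  computes  \hat f(q)_a  where  u = t2/a,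
   q = Internal qs p has n children and recs[i] = \hat{(.)} for child topology i. *)
Fixpoint build (n : nat) (recs : seq lifter) (qs : seq ptree) (p : PIFO nat)
    (f : seq nat -> seq nat) (a : seq nat) (u : topo) {struct u} : ptree :=
  let i := find (fun i => f [:: i] == a) (iota 0 n) in
  if i < n then
    nth (fun _ _ q => q) recs i u (fchild f i) (nth (Leaf [::]) qs i)
  else
    match u with
    | Star => Leaf [::] (* unreachable for a strict prefix of some f(i) *)
    | Node us =>
        Internal
          ((fix go (us : seq topo) (j : nat) {struct us} : seq ptree :=
              match us with
              | [::] => [::]
              | u' :: us' =>
                  (if has (fun i => prefix (rcons a j) (f [:: i])) (iota 0 n)
                   then build n recs qs p f (rcons a j) u'
                   else empty_tree u') :: go us' j.+1
              end) us 0)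
          (pmap (fun e => omap (fun j => (j, e.2)) (child_towards a (f [:: e.1]))) p)
    end.

Fixpoint hat_lift (t1 : topo) : lifter :=
  match t1 with
  | Star => fun _ _ q => q
  | Node ts1 =>
      let recs := map hat_lift ts1 in
      fun t2 f q =>
        match q with
        | Internal qs p => build (size ts1) recs qs p f [::] t2
        | Leaf _ => q (* ill-typed input *)
        end
  end.

End Trees.

From mathcomp Require Import all_boot all_order.
Set Implicit Arguments. Unset Strict Implicit. Unset Printing Implicit Defensive.

(* Let q = Internal(q_1, ..., q_n, p) and let a be an address of t2 that is a
   prefix of some f(i). By induction on t2/a, the lifted subtree at a holds
   exactly the packets of the q_i with a <= f(i); this needs that lifting the
   children preserves their size, which is the same statement one level down.
   The entries of the PIFO p_a pointing to child j are the entries of p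
   pointing to some i with a.j <= f(i), so well-formedness of q makes their
   number equal to the size of the lifted subtree at a.j. *)

Lemma topo_nth_ind (P : topo -> Prop) :
  P Star ->
  (forall ts, (forall i, i < size ts -> P (nth Star ts i)) -> P (Node ts)) ->
  forall t, P t.
Proof.
move=> PStar PNode; fix IH 1; case=> [|ts]; first exact: PStar.
apply: PNode; move: ts; fix IHts 1; case=> [|t ts] [|i] lt_i_ts.
- discriminate lt_i_ts.
- discriminate lt_i_ts.
- exact: IH.
- exact: (IHts ts i lt_i_ts).
Qed.

Lemma rcons_prefixE (T : eqType) (x0 : T) (a b : seq T) x :
  prefix (rcons a x) b = [&& prefix a b, size a < size b & nth x0 b (size a) == x].
Proof.
elim: a b => [|y a IH] [|z b] //=; first by rewrite prefix0s andbT eq_sym.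
by rewrite IH andbA.
Qed.

Lemma prefix_size_lt (T : eqType) (a b : seq T) : prefix a b -> b != a -> size a < size b.
Proof.
move=> pre_ab; apply: contraNT; rewrite -leqNgt => le_ba.
by move: pre_ab; rewrite prefixE => /eqP <-; rewrite take_oversize.
Qed.

Lemma big_iota_pick (R : Type) (idx : R) (op : Monoid.com_law idx) m x (F : nat -> R) :
  x < m -> \big[op/idx]_(i <- iota 0 m) (if i == x then F i else idx) = F x.
Proof.
move=> lt_xm; rewrite (bigD1_seq x) ?mem_iota ?iota_uniq //= eqxx big1 ?Monoid.mulm1 //.
by move=> i /negPf ->.
Qed.

Lemma big_rcons_prefix (R : Type) (idx : R) (op : Monoid.com_law idx) m
    (a b : seq nat) (F : nat -> R) :
  prefix a b -> size a < size b -> nth 0 b (size a) < m ->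
  \big[op/idx]_(j <- iota 0 m | prefix (rcons a j) b) F j = F (nth 0 b (size a)).
Proof.
move=> pre_ab lt_ab lt_m; rewrite big_mkcond -(big_iota_pick op F lt_m).
by apply: eq_bigr => j _; rewrite (rcons_prefixE 0) pre_ab lt_ab eq_sym.
Qed.

Lemma count_pmap (T U : Type) (g : T -> option U) (P : pred U) (s : seq T) :
  count P (pmap g s) = count (fun x => if g x is Some y then P y else false) s.
Proof. by elim: s => //= x s IH; case: (g x) => [y|] /=; rewrite IH. Qed.

Lemma count_partition (T : Type) (key : T -> nat) (P : pred nat) n (s : seq T) :
  all (fun x => key x < n) s ->
  count (fun x => P (key x)) s = \sum_(i <- iota 0 n | P i) count (fun x => key x == i) s.
Proof.
elim: s => [|x s IH] /=; first by rewrite big1.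
case/andP=> lt_key /IH ->; rewrite big_split /=; congr addn.
rewrite big_mkcond (eq_bigr (fun i => if i == key x then nat_of_bool (P i) else 0)).
  by rewrite big_iota_pick.
by move=> i _; rewrite eq_sym; case: eqP => [->|]; case: (P _).
Qed.

Lemma child_towardsE a b j : (child_towards a b == Some j) = prefix (rcons a j) b.
Proof.
rewrite (rcons_prefixE 0) /child_towards; case: ifP => [/andP[-> ->] //|].
by case: (prefix a b) (size a < size b) => [] [].
Qed.

Lemma addr_cat t a b : addr t (a ++ b) = addr t a && addr (subtopo t a) b.
Proof. by elim: a t => [|i a IH] [|ts] //=; rewrite IH andbA. Qed.

Lemma subtopo_cat t a b : subtopo t (a ++ b) = subtopo (subtopo t a) b.
Proof. by elim: a t => [|i a IH] [|ts] //=; case: (b). Qed.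

Lemma subtopo_strict_prefix t a b : addr t b -> prefix a b -> size a < size b ->
  exists2 us, subtopo t a = Node us & nth 0 b (size a) < size us.
Proof.
elim: a t b => [|x a IH] [|ts] [|y b] //=; first by case/andP; exists ts.
by case/andP=> _ addr_b /andP[/eqP -> pre_ab] lt_ab; apply: IH.
Qed.

Definition child_index (f : seq nat -> seq nat) n a := find (fun i => f [:: i] == a) (iota 0 n).

Lemma child_indexK f n a : child_index f n a < n -> f [:: child_index f n a] = a.
Proof.
move=> lt_n; apply/eqP; have has_a : has (fun i => f [:: i] == a) (iota 0 n).
  by rewrite has_find size_iota.
by have := nth_find 0 has_a; rewrite nth_iota.
Qed.

Lemma child_index_notin f n a i : n <= child_index f n a -> i < n -> f [:: i] != a.
Proof.
move=> ge_n lt_in; have /hasPn no_a : ~~ has (fun i => f [:: i] == a) (iota 0 n).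
  by rewrite has_find size_iota -leqNgt.
by apply: no_a; rewrite mem_iota.
Qed.

Section Embedding.
Variables (ts1 : seq topo) (t2 : topo) (f : seq nat -> seq nat).
Hypothesis femb : embedding (Node ts1) t2 f.
Local Notation n := (size ts1).

Lemma addr_f_child i : i < n -> addr t2 (f [:: i]).
Proof. by case: femb => addr_f _ _ _ _ lt_in; apply: addr_f; rewrite /= lt_in. Qed.

Lemma prefix_f_child i i' : i < n -> i' < n -> prefix (f [:: i]) (f [:: i']) = (i == i').
Proof. by case: femb => _ _ _ _ pre_f lt_in lt_i'n; rewrite -pre_f /= ?lt_in ?lt_i'n ?andbT. Qed.

Lemma f_cons_fchild i a : i < n -> addr (nth Star ts1 i) a ->
  f (i :: a) = f [:: i] ++ fchild f i a.
Proof.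
case: femb => _ _ _ _ pre_f lt_in addr_a.
have : prefix (f [:: i]) (f (i :: a)) by rewrite -pre_f /= ?eqxx ?prefix0s ?lt_in ?addr_a.
by rewrite /fchild => /prefixP[s ->]; rewrite drop_size_cat.
Qed.

Lemma embedding_fchild i : i < n ->
  embedding (nth Star ts1 i) (subtopo t2 (f [:: i])) (fchild f i).
Proof.
move=> lt_in; have fE := f_cons_fchild lt_in.
case: femb => addr_f inj_f _ star_f pre_f; split.
- move=> a addr_a; have := addr_f (i :: a); rewrite /= lt_in addr_a (fE a addr_a).
  by rewrite addr_cat => /(_ isT) /andP[].
- move=> a a' addr_a addr_a' eq_fa.
  have := inj_f (i :: a) (i :: a'); rewrite /= lt_in addr_a addr_a'.
  by rewrite (fE a addr_a) (fE a' addr_a') eq_fa => /(_ isT isT erefl) [].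
- by rewrite /fchild drop_size.
- move=> a addr_a star_a; have := star_f (i :: a); rewrite /= lt_in addr_a (fE a addr_a).
  by rewrite subtopo_cat; apply.
- move=> a a' addr_a addr_a'; have := pre_f (i :: a) (i :: a').
  rewrite /= lt_in addr_a addr_a' (fE a addr_a) (fE a' addr_a') prefix_catr //.
  by rewrite !eqxx; apply.
Qed.

End Embedding.

(* The local fixpoint with which [build] lists the children of a node. *)
Lemma fix_mapiE (T : Type) (G : nat -> topo -> T) (us : seq topo) j :
  (fix go (us : seq topo) (j : nat) {struct us} : seq T :=
     if us is u :: us' then G j u :: go us' j.+1 else [::]) us j
  = [seq G (j + k) (nth Star us k) | k <- iota 0 (size us)].
Proof.
elim: us j => [|u us IH] j //=; rewrite addn0 IH -(addn0 1) iotaDl -map_comp.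
by congr cons; apply: eq_map => k /=; rewrite addnS.
Qed.

Section Lift.
Variables (Pkt Rk : Type).
Local Notation tree := (ptree Pkt Rk).
Local Notation L0 := (@Leaf Pkt Rk [::]).

Lemma has_topo_Internal (qs : seq tree) p ts : has_topo (Internal qs p) (Node ts) ->
  [/\ size qs = size ts, all (fun e => e.1 < size ts) p &
      forall i, i < size ts -> has_topo (nth L0 qs i) (nth Star ts i)].
Proof.
move=> /= [size_qs [all_p topo_qs]]; split=> //; clear size_qs all_p.
by elim: qs ts topo_qs => [|q qs IH] [|t ts] //= [topo_q topo_qs] [|i] //= /IH; apply.
Qed.

Lemma wf_Internal (qs : seq tree) p : wf (Internal qs p) <->
  (forall i, i < size qs -> wf (nth L0 qs i)) /\
  (forall i, i < size qs -> count (fun e => e.1 == i) p = tsize (nth L0 qs i)).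
Proof.
rewrite /=; split=> -[wf_qs count_p]; split=> //; clear count_p.
- by elim: qs wf_qs => [|q qs IH] //= [wf_q wf_qs] [|i] //= /IH; apply.
- elim: qs wf_qs => [|q qs IH] //= wf_qs; split; first exact: (wf_qs 0).
  by apply: IH => i; apply: (wf_qs i.+1).
Qed.

Lemma tsize_empty_tree t : tsize (empty_tree Pkt Rk t) = 0.
Proof.
elim/topo_nth_ind: t => [|ts IH] //=.
by elim: ts IH => //= t ts IHts IH; rewrite (IH 0) // IHts // => i; apply: (IH i.+1).
Qed.

Lemma wf_empty_tree t : wf (empty_tree Pkt Rk t).
Proof.
elim/topo_nth_ind: t => [|ts IH] //; apply/wf_Internal; rewrite size_map.
by split=> i lt_i; rewrite (nth_map Star) // ?tsize_empty_tree //; apply: IH.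
Qed.

Section Node.
Variables (ts1 : seq topo) (t2 : topo) (f : seq nat -> seq nat).
Variables (qs : seq tree) (p : PIFO Rk nat).
Hypothesis femb : embedding (Node ts1) t2 f.
Hypothesis qtopo : has_topo (Internal qs p) (Node ts1).
Local Notation n := (size ts1).
Local Notation recs := (map (@hat_lift Pkt Rk) ts1).
Local Notation pifo_at a :=
  (pmap (fun e => omap (fun j => (j, e.2)) (child_towards a (f [:: e.1]))) p).
Definition child_at a j u : tree :=
  if has (fun i => prefix (rcons a j) (f [:: i])) (iota 0 n)
  then build n recs qs p f (rcons a j) u else empty_tree Pkt Rk u.

Lemma buildE a u : build n recs qs p f a u =
  let i := child_index f n a in
  if i < n then hat_lift (nth Star ts1 i) u (fchild f i) (nth L0 qs i) else
  if u is Node us then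
    Internal [seq child_at a j (nth Star us j) | j <- iota 0 (size us)] (pifo_at a)
  else L0.
Proof.
case: u => [|us] /=; rewrite /child_index; case: ifP => lt_n; rewrite ?(nth_map Star) //.
by congr Internal; apply: fix_mapiE.
Qed.

Lemma embedding_child_index a : child_index f n a < n ->
  embedding (nth Star ts1 (child_index f n a)) (subtopo t2 a) (fchild f (child_index f n a)).
Proof. by move=> lt_n; have := embedding_fchild femb lt_n; rewrite child_indexK. Qed.

Lemma big_prefix_child_index a (F : nat -> nat) : child_index f n a < n ->
  \sum_(i <- iota 0 n | prefix a (f [:: i])) F i = F (child_index f n a).
Proof.
move=> lt_n; rewrite big_mkcond -(big_iota_pick addn F lt_n); apply: eq_big_seq => i.
rewrite mem_iota => /andP[_ lt_i].
by rewrite -{1}(child_indexK lt_n) (prefix_f_child femb) // eq_sym.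
Qed.

Lemma size_lt_prefix_f_child a i : n <= child_index f n a -> i < n -> prefix a (f [:: i]) ->
  size a < size (f [:: i]).
Proof. by move=> ge_n lt_i pre_a; apply: prefix_size_lt pre_a (child_index_notin ge_n lt_i). Qed.

Hypothesis tsize_child : forall i, i < n -> forall t f' (q : tree),
  embedding (nth Star ts1 i) t f' -> has_topo q (nth Star ts1 i) ->
  tsize (hat_lift (nth Star ts1 i) t f' q) = tsize q.

Lemma tsize_build a : tsize (build n recs qs p f a (subtopo t2 a)) =
  \sum_(i <- iota 0 n | prefix a (f [:: i])) tsize (nth L0 qs i).
Proof.
have [_ _ topo_qs] := has_topo_Internal qtopo.
have found b : child_index f n b < n -> tsize (build n recs qs p f b (subtopo t2 b)) =
    \sum_(i <- iota 0 n | prefix b (f [:: i])) tsize (nth L0 qs i).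
  move=> lt_n; rewrite buildE /= lt_n big_prefix_child_index //.
  by rewrite tsize_child //; [apply: embedding_child_index | apply: topo_qs].
have [u ua] : {u | subtopo t2 a = u} by exists (subtopo t2 a).
rewrite ua; elim/topo_nth_ind: u a ua => [|us IHus] a ua.
all: case: (ltnP (child_index f n a) n) => [lt_n|ge_n]; first by rewrite -ua found.
all: rewrite buildE /= ltnNge ge_n /=.
- rewrite big_hasC //; apply/hasPn => i; rewrite mem_iota => /andP[_ lt_i].
  apply/negP => pre_a; have lt_a := size_lt_prefix_f_child ge_n lt_i pre_a.
  by have [us] := subtopo_strict_prefix (addr_f_child femb lt_i) pre_a lt_a; rewrite ua.
rewrite sumnE !big_map (eq_big_seq (fun j =>
  \sum_(i <- iota 0 n | prefix (rcons a j) (f [:: i])) tsize (nth L0 qs i))); last first.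
  move=> j; rewrite mem_iota => /andP[_ lt_j].
  rewrite /child_at; case: ifP => [_|/negbT no_i]; last by rewrite tsize_empty_tree big_hasC.
  by apply: IHus; rewrite // -cats1 subtopo_cat ua.
rewrite (exchange_big_dep xpredT) //= [RHS]big_mkcond; apply: eq_big_seq => i.
rewrite mem_iota => /andP[_ lt_i]; case: ifP => pre_a.
  have lt_a := size_lt_prefix_f_child ge_n lt_i pre_a.
  have [us' ua' lt_nth] := subtopo_strict_prefix (addr_f_child femb lt_i) pre_a lt_a.
  by move: ua'; rewrite ua => -[us'E]; rewrite big_rcons_prefix // us'E.
by rewrite big_pred0 // => j; rewrite (rcons_prefixE 0) pre_a.
Qed.

Lemma tsize_child_at a j : tsize (child_at a j (subtopo t2 (rcons a j))) =
  \sum_(i <- iota 0 n | prefix (rcons a j) (f [:: i])) tsize (nth L0 qs i).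
Proof.
rewrite /child_at; case: ifP => [_|/negbT no_i]; first exact: tsize_build.
by rewrite tsize_empty_tree big_hasC.
Qed.

Hypothesis qwf : wf (Internal qs p).

Lemma count_pifo_at a j : count (fun e => e.1 == j) (pifo_at a) =
  \sum_(i <- iota 0 n | prefix (rcons a j) (f [:: i])) tsize (nth L0 qs i).
Proof.
have [size_qs all_p _] := has_topo_Internal qtopo; have /wf_Internal[_ count_p] := qwf.
rewrite count_pmap (eq_count (a2 := fun e => prefix (rcons a j) (f [:: e.1]))); last first.
  by move=> e; rewrite -child_towardsE; case: child_towards.
rewrite (count_partition (fun i => prefix (rcons a j) (f [:: i])) all_p).
rewrite big_seq_cond [RHS]big_seq_cond; apply: eq_bigr => i.
by rewrite mem_iota => /andP[/andP[_ lt_i] _]; rewrite count_p ?size_qs.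
Qed.

Hypothesis wf_child : forall i, i < n -> forall t f' (q : tree),
  embedding (nth Star ts1 i) t f' -> has_topo q (nth Star ts1 i) -> wf q ->
  wf (hat_lift (nth Star ts1 i) t f' q).

Lemma wf_build a : wf (build n recs qs p f a (subtopo t2 a)).
Proof.
have [size_qs _ topo_qs] := has_topo_Internal qtopo; have /wf_Internal[wf_qs _] := qwf.
have found b : child_index f n b < n -> wf (build n recs qs p f b (subtopo t2 b)).
  move=> lt_n; rewrite buildE /= lt_n; apply: wf_child => //.
  - exact: embedding_child_index.
  - exact: topo_qs.
  - by apply: wf_qs; rewrite size_qs.
have [u ua] : {u | subtopo t2 a = u} by exists (subtopo t2 a).
rewrite ua; elim/topo_nth_ind: u a ua => [|us IHus] a ua.
all: case: (ltnP (child_index f n a) n) => [lt_n|ge_n]; first by rewrite -ua; apply: found.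
all: rewrite buildE /= ltnNge ge_n //=.
apply/wf_Internal; rewrite size_map size_iota; split=> j lt_j.
all: rewrite (nth_map 0) ?size_iota // nth_iota // add0n.
all: have uj : nth Star us j = subtopo t2 (rcons a j) by rewrite -cats1 subtopo_cat ua.
- by rewrite /child_at; case: ifP => _; [apply: IHus | apply: wf_empty_tree].
- by rewrite count_pifo_at uj tsize_child_at.
Qed.

End Node.

Lemma tsize_hat_lift t1 t2 f (q : tree) : embedding t1 t2 f -> has_topo q t1 ->
  tsize (hat_lift t1 t2 f q) = tsize q.
Proof.
elim/topo_nth_ind: t1 t2 f q => [|ts1 IH] t2 f [?|qs p] // femb qtopo.
have [size_qs _ _] := has_topo_Internal qtopo.
rewrite /= (tsize_build femb qtopo IH [::]) sumnE big_map (big_nth L0) size_qs.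
by rewrite /index_iota subn0; apply: eq_bigl => i; rewrite prefix0s.
Qed.

Lemma wf_hat_lift t1 t2 f (q : tree) : embedding t1 t2 f -> has_topo q t1 -> wf q ->
  wf (hat_lift t1 t2 f q).
Proof.
elim/topo_nth_ind: t1 t2 f q => [|ts1 IH] t2 f [?|qs p] // femb qtopo qwf.
exact: (wf_build femb qtopo (fun i _ => @tsize_hat_lift _) qwf IH [::]).
Qed.

End Lift.

Theorem lemma5p5 (Pkt : Type) (d : Order.disp_t) (Rk : orderType d)
    (t1 t2 : topo) (f : seq nat -> seq nat) (q : ptree Pkt Rk) :
  embedding t1 t2 f -> has_topo q t1 -> wf q -> wf (hat_lift t1 t2 f q).
Proof. exact: wf_hat_lift. Qed.
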